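(* Let $r,s\ge 1$ and let $A_1,\dots,A_r$ be real $s\times s$ matrices with non-negative entries. Let $A$ be the $rs\times rs$ block circulant matrix \[ A = \begin{pmatrix} A_1 & A_2 & A_3 & \dots & A_r\\ A_r & A_1 & A_2 & \dots & A_{r-1}\\ A_{r-1} & A_r & A_1 & \dots & A_{r-2}\\ \vdots & & & & \vdots\\ A_2 & A_3 & A_4 & \dots & A_1 \end{pmatrix}. \] Then $\rho(A) = \rho\left(\sum_{i=1}^r A_i \right)$.
   Context: For a square matrix $M$, $\rho(M)$ denotes its spectral radius. *)

From HB Require Import structures.
From mathcomp Require Import all_boot all_order all_algebra.
From mathcomp Require Import reals.
From mathcomp.real_closed Require Import complex.
Set Implicit Arguments. Unset Strict Implicit. Unset Printing Implicit Defensive.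
Import Order.TTheory GRing.Theory Num.Theory.
Local Open Scope ring_scope.
Local Open Scope complex_scope.

(* Eigenvalues (with multiplicity) of a complex square matrix: the roots of
   its characteristic polynomial, obtained from its factorisation into
   linear factors over the algebraically closed field R[i]. *)
Definition mx_eigenvalues (R : rcfType) (n : nat) (M : 'M[R[i]]_n) : seq R[i] :=
  sval (closed_field_poly_normal (char_poly M)).

(* Spectral radius of a real square matrix:
   rho(M) = max { |lambda| : lambda complex eigenvalue of M } (0 if n = 0). *)
Definition spectral_radius (R : rcfType) (n : nat) (M : 'M[R]_n) : R[i] :=
  \big[Num.max/0]_(z <- mx_eigenvalues (map_mx (fun x : R => x%:C) M)) `|z|.

(* Block circulant matrix with first block row A_0, A_1, ..., A_r
   (blocks indexed 0..r, each of size s.+1); block (p, q) is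
   A_((q - p) mod (r+1)). *)
Definition block_circulant (R : Type) (r s : nat) (A : 'I_r.+1 -> 'M[R]_s.+1)
  : 'M[R]_(r.+1 * s.+1) :=
  \matrix_(i, j) A (inord (((j %/ s.+1) + r.+1 - (i %/ s.+1)) %% r.+1))
                   (inord (i %% s.+1)) (inord (j %% s.+1)).

From HB Require Import structures.
From mathcomp Require Import all_boot all_order all_algebra.
From mathcomp Require Import reals.
From mathcomp.real_closed Require Import complex polyrcf.
From mathcomp Require Import ring zify.
Set Implicit Arguments. Unset Strict Implicit. Unset Printing Implicit Defensive.
Import Order.TTheory GRing.Theory Num.Theory.
Local Open Scope ring_scope.

(* Let S = A_1 + ... + A_r.  Stacking r copies of a row eigenvector of S gives
   an eigenvector of the block circulant matrix with the same eigenvalue, so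
   rho(S) <= rho(A).  Conversely, if x A = lambda x, then by the triangle
   inequality the row z obtained by adding up the moduli of the r blocks of x
   satisfies |lambda| z <= z S, with z >= 0 and z <> 0.  Such a subinvariant
   vector forces a real eigenvalue t >= |lambda| of S: otherwise mu I - S,
   with mu = |lambda|, would be inverse-nonnegative (x (mu I - S) >= 0 implies
   x >= 0, proved by induction on the size through a Schur complement), and
   applying this to x = -z would give z <= 0. *)

Local Notation noroot p := (forall x, ~~ root p x).
Local Notation cmx M := (map_mx (fun x => x%:C)%C M).
Local Notation normc := (@Normc.normc _).

Section BlockIndex.
Variables r s : nat.

Lemma block_index_subproof (p : 'I_r.+1) (j : 'I_s.+1) :
  (p * s.+1 + j < r.+1 * s.+1)%N.
Proof. have := ltn_ord p; have := ltn_ord j; nia. Qed.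

Definition block_index p j : 'I_(r.+1 * s.+1) :=
  Ordinal (block_index_subproof p j).

Lemma block_index_div p j : (block_index p j %/ s.+1)%N = p.
Proof. by rewrite /= divnMDl // divn_small ?addn0. Qed.

Lemma block_index_mod p j : (block_index p j %% s.+1)%N = j.
Proof. by rewrite /= modnMDl modn_small. Qed.

Variant is_block_index : 'I_(r.+1 * s.+1) -> Type :=
  IsBlockIndex p j : is_block_index (block_index p j).

Lemma block_indexP k : is_block_index k.
Proof.
have -> : k = block_index (inord (k %/ s.+1)) (inord (k %% s.+1)).
  apply: val_inj; rewrite /= !inordK ?ltn_pmod -?divn_eq //.
  by rewrite ltn_divLR // ltn_ord.
exact: IsBlockIndex.
Qed.

Lemma sum_block_index (V : nmodType) (F : 'I_(r.+1 * s.+1) -> V) :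
  \sum_k F k = \sum_p \sum_j F (block_index p j).
Proof.
rewrite pair_big /= (reindex (fun pj => block_index pj.1 pj.2)) //.
exists (fun k : 'I_(r.+1 * s.+1) =>
          (inord (k %/ s.+1) : 'I_r.+1, inord (k %% s.+1) : 'I_s.+1)).
  by move=> [p j] _ /=; rewrite block_index_div block_index_mod !inord_val.
move=> k _; case: (block_indexP k) => p j /=.
by rewrite block_index_div block_index_mod !inord_val.
Qed.

Lemma block_circulantE (T : Type) (A : 'I_r.+1 -> 'M[T]_s.+1) p j q l :
  block_circulant A (block_index p j) (block_index q l) = A (q - p) j l.
Proof.
rewrite mxE !block_index_div !block_index_mod !inord_val.
suff -> : inord ((q + r.+1 - p) %% r.+1) = q - p by [].
apply: val_inj; rewrite /= inordK ?ltn_pmod //.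
by rewrite modnDmr addnBA // ltnW.
Qed.

End BlockIndex.

Section BlockStack.
Variables (R : pzSemiRingType) (r s : nat) (A : 'I_r.+1 -> 'M[R]_s.+1).

(* The column of r.+1 identity blocks of size s.+1. *)
Definition block_stack : 'M[R]_(r.+1 * s.+1, s.+1) :=
  \matrix_(k, l) (inord (k %% s.+1) == l)%:R.

Lemma block_stackE p j l : block_stack (block_index p j) l = (j == l)%:R.
Proof. by rewrite mxE block_index_mod inord_val. Qed.

Lemma mul_block_stackE m (M : 'M[R]_(m, r.+1 * s.+1)) i l :
  (M *m block_stack) i l = \sum_q M i (block_index q l).
Proof.
rewrite mxE sum_block_index; apply: eq_bigr => q _.
rewrite (bigD1 l) //= big1 => [|j /negPf jl].
  by rewrite block_stackE eqxx mulr1 addr0.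
by rewrite block_stackE jl mulr0.
Qed.

Lemma tr_block_stack_mulE n (M : 'M[R]_(r.+1 * s.+1, n)) j k :
  (block_stack^T *m M) j k = \sum_p M (block_index p j) k.
Proof.
rewrite mxE sum_block_index; apply: eq_bigr => p _.
rewrite (bigD1 j) //= big1 => [|l /negPf lj].
  by rewrite mxE block_stackE eqxx mul1r addr0.
by rewrite mxE block_stackE lj mul0r.
Qed.

Lemma block_stack_mulE n (M : 'M[R]_(s.+1, n)) p j k :
  (block_stack *m M) (block_index p j) k = M j k.
Proof.
rewrite mxE (bigD1 j) //= big1 => [|l /negPf lj].
  by rewrite block_stackE eqxx mul1r addr0.
by rewrite block_stackE eq_sym lj mul0r.
Qed.

Lemma mul_tr_block_stackE m (M : 'M[R]_(m, s.+1)) i q l :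
  (M *m block_stack^T) i (block_index q l) = M i l.
Proof.
rewrite mxE (bigD1 l) //= big1 => [|j /negPf jl].
  by rewrite mxE block_stackE eqxx mulr1 addr0.
by rewrite mxE block_stackE eq_sym jl mulr0.
Qed.

Lemma mul_block_circulant_stack :
  block_circulant A *m block_stack = block_stack *m \sum_k A k.
Proof.
apply/matrixP => k l; case: (block_indexP k) => p j.
rewrite mul_block_stackE block_stack_mulE summxE [RHS](reindex_inj (addIr (- p))).
by apply: eq_bigr => q _; rewrite block_circulantE.
Qed.

Lemma mul_tr_block_stack_circulant :
  block_stack^T *m block_circulant A = (\sum_k A k) *m block_stack^T.
Proof.
apply/matrixP => j k; case: (block_indexP k) => q l.
rewrite tr_block_stack_mulE mul_tr_block_stackE summxE.
rewrite [RHS](reindex_inj (h := fun p => q - p)) => [|x y /addrI/oppr_inj //].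
by apply: eq_bigr => p _; rewrite block_circulantE.
Qed.

End BlockStack.

Arguments block_stack : clear implicits.

Lemma eigenvalue_block_circulant (F : fieldType) r s (A : 'I_r.+1 -> 'M[F]_s.+1) a :
  eigenvalue (\sum_k A k) a -> eigenvalue (block_circulant A) a.
Proof.
case/eigenvalueP => v vS v_neq0; apply/eigenvalueP.
exists (v *m (block_stack F r s)^T).
  by rewrite -mulmxA mul_tr_block_stack_circulant mulmxA vS scalemxAl.
apply: contra v_neq0 => /eqP vP0; apply/eqP/rowP => j.
have := congr1 (fun w : 'rV[F]_(r.+1 * s.+1) => w 0 (block_index ord0 j)) vP0.
by rewrite /= mul_tr_block_stackE !mxE.
Qed.

Lemma map_block_circulant (T T' : Type) (f : T -> T') r s
    (A : 'I_r.+1 -> 'M[T]_s.+1) :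
  map_mx f (block_circulant A) = block_circulant (fun k => map_mx f (A k)).
Proof. by apply/matrixP => i j; rewrite !mxE. Qed.

Section RealPoly.
Variable R : rcfType.
Implicit Types p : {poly R}.

Lemma monic_pinfty_gt0 p mu : p \is monic ->
  {in `[mu, +oo[, noroot p} -> {in `[mu, +oo[, forall t, 0 < p.[t]}.
Proof.
move=> p_monic p_noroot t t_ge; have := sgp_pinftyP p_noroot t_ge.
by rewrite /sgp_pinfty (monicP p_monic) sgr1 => /eqP; rewrite sgr_cp0.
Qed.

Lemma poly_max_root p t : p != 0 -> root p t ->
  exists2 y, t <= y & root p y /\ {in `]y, +oo[, noroot p}.
Proof.
move=> p_neq0 pt; have t_lt_cb : t < cauchy_bound p.
  by have := root_in_cauchy_bound p_neq0 pt; rewrite in_itv /= => /andP[].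
case: (prev_rootP p (t - 1) (cauchy_bound p)) => [p0|y _ py0 _ y_max|_ _ _ no_root].
- by rewrite p0 eqxx in p_neq0.
- have above_y z : y < z -> ~~ root p z.
    move=> yz; have [z_lt_cb|cb_le_z] := ltP z (cauchy_bound p).
      by apply: y_max; rewrite in_itv /= yz.
    by apply: ge_cauchy_bound; rewrite ?in_itv /= ?cb_le_z.
  exists y; first by rewrite leNgt; apply: contraL pt; exact: above_y.
  by split=> [|z]; [exact/rootP | rewrite in_itv andbT; exact: above_y].
- have := no_root t; rewrite in_itv /= t_lt_cb ltrBlDr ltrDl ltr01 pt.
  by move=> /(_ isT).
Qed.

Lemma poly_right_ge0 p y : (forall z, y < z -> 0 <= p.[z]) -> 0 <= p.[y].
Proof.
move=> p_ge0; rewrite leNgt; apply/negP => py_lt0.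
have [d d_gt0 near_y] : exists2 d, 0 < d &
    forall z, `|z - y| < d -> `|p.[z] - p.[y]| < - p.[y].
  by apply: poly_cont; rewrite oppr_gt0.
have y_lt : y < y + d / 2 by rewrite ltrDl divr_gt0.
have : `|(y + d / 2) - y| < d.
  rewrite addrAC subrr add0r gtr0_norm ?divr_gt0 //.
  by rewrite ltr_pdivrMr // ltr_pMr // ltr1n.
move=> /near_y /(le_lt_trans (ler_norm _)); rewrite ltrBlDr addNr.
by move=> /(le_lt_trans (p_ge0 _ y_lt)); rewrite ltxx.
Qed.

End RealPoly.

Lemma horner_char_poly (R : comNzRingType) n (S : 'M[R]_n) t :
  (char_poly S).[t] = \det (t%:M - S).
Proof.
rewrite horner_sum; apply: eq_bigr => s _.
rewrite hornerM horner_exp !hornerE; congr (_ * _).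
rewrite (big_morph _ (fun p q => hornerM p q t) (hornerC 1 t)).
by apply: eq_bigr => i _; rewrite !mxE !(hornerE, hornerMn).
Qed.

Lemma unitmx_char_poly (F : fieldType) n (S : 'M[F]_n) t :
  (t%:M - S \in unitmx) = ~~ root (char_poly S) t.
Proof. by rewrite unitmxE unitfE rootE horner_char_poly. Qed.

Lemma det_block_mx_schur (R : comUnitRingType) n (a : 'M[R]_1) (b : 'M_(1, n))
    (c : 'M_(n, 1)) (D : 'M_n) : D \in unitmx ->
  \det (block_mx a b c D : 'M_(1 + n)) = \det D * (a - b *m invmx D *m c) 0 0.
Proof.
move=> D_unit.
have -> : block_mx a b c D = block_mx 1%:M b 0 D *m
          block_mx (a - b *m invmx D *m c) 0 (invmx D *m c) 1%:M.
  rewrite mulmx_block !mul1mx !mul0mx ?mulmx0 !mulmx1 ?addr0 ?add0r.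
  by rewrite !mulmxA (mulmxV D_unit) mul1mx subrK.
rewrite det_mulmx det_ublock det_lblock det1 det_mx11 mul1r.
by rewrite [\det 1%:M]det1 mulr1.
Qed.

Section NonnegMatrix.
Variable R : numDomainType.

Definition nnegmx m n (M : 'M[R]_(m, n)) := forall i j, 0 <= M i j.

Lemma nnegmx_mul m n p (M : 'M[R]_(m, n)) (N : 'M[R]_(n, p)) :
  nnegmx M -> nnegmx N -> nnegmx (M *m N).
Proof. by move=> M0 N0 i j; rewrite mxE sumr_ge0 // => k _; rewrite mulr_ge0. Qed.

Definition inverse_nonneg n (M : 'M[R]_n) :=
  forall x : 'rV_n, nnegmx (x *m M) -> nnegmx x.

End NonnegMatrix.

Lemma inverse_nonneg_mulV (F : numFieldType) n (M : 'M[F]_n) (y : 'rV_n) :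
  inverse_nonneg M -> M \in unitmx -> nnegmx y -> nnegmx (y *m invmx M).
Proof. by move=> M_inv M_unit y0; apply: M_inv; rewrite mulmxKV. Qed.

Section MMatrix.
Variable R : rcfType.

Section InductionStep.
Variable n : nat.
Hypothesis IH : forall (D : 'M[R]_n) mu, nnegmx D ->
  {in `[mu, +oo[, noroot (char_poly D)} -> inverse_nonneg (mu%:M - D).

Variable S : 'M[R]_(1 + n).
Hypothesis S_ge0 : nnegmx S.

Local Notation a := (ulsubmx S 0 0).
Local Notation b := (ursubmx S).
Local Notation c := (dlsubmx S).
Local Notation D := (drsubmx S).

Let D_ge0 : nnegmx D. Proof. by move=> i j; rewrite !mxE; apply: S_ge0. Qed.
Let b_ge0 : nnegmx b. Proof. by move=> i j; rewrite !mxE; apply: S_ge0. Qed.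
Let c_ge0 : nnegmx c. Proof. by move=> i j; rewrite !mxE; apply: S_ge0. Qed.

Lemma scalar_mx_sub_block t :
  t%:M - S = block_mx (t%:M - ulsubmx S) (- b) (- c) (t%:M - D).
Proof.
rewrite -{1}(submxK S) (scalar_mx_block 1 n) opp_block_mx add_block_mx.
by rewrite !(oppr0, add0r, sub0r).
Qed.

Lemma horner_char_poly_schur t : ~~ root (char_poly D) t ->
  (char_poly S).[t] =
  (char_poly D).[t] * (t - a - (b *m invmx (t%:M - D) *m c) 0 0).
Proof.
rewrite -unitmx_char_poly => D_unit.
rewrite !horner_char_poly scalar_mx_sub_block det_block_mx_schur //.
by rewrite !mulNmx mulmxN opprK !mxE eqxx mulr1n.
Qed.

Lemma schur_complement_ge0 t : {in `[t, +oo[, noroot (char_poly D)} ->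
  0 <= (b *m invmx (t%:M - D) *m c) 0 0.
Proof.
move=> D_noroot; have t_in : t \in `[t, +oo[ by rewrite in_itv /= lexx.
have D_unit : t%:M - D \in unitmx by rewrite unitmx_char_poly D_noroot.
exact: nnegmx_mul (inverse_nonneg_mulV (IH D_ge0 D_noroot) D_unit b_ge0) c_ge0 0 0.
Qed.

(* Beyond the largest root y of char_poly D, the polynomial q below equals
   (char_poly D).[z] times a nonnegative Schur complement term; by continuity
   q.[y] >= 0, i.e. (char_poly S).[y] <= 0, although y >= mu. *)
Lemma char_poly_drsubmx_noroot mu : {in `[mu, +oo[, noroot (char_poly S)} ->
  {in `[mu, +oo[, noroot (char_poly D)}.
Proof.
move=> S_noroot t1; rewrite in_itv andbT /= => mu_le_t1; apply/negP => D_t1.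
have [y t1_le_y [D_y D_noroot_y]] :=
  poly_max_root (monic_neq0 (char_poly_monic D)) D_t1.
pose q := ('X - a%:P) * char_poly D - char_poly S.
have q_ge0 : 0 <= q.[y].
  apply: poly_right_ge0 => z y_lt_z.
  have D_noroot_z : {in `[z, +oo[, noroot (char_poly D)}.
    move=> w; rewrite !in_itv !andbT /= => z_le_w.
    by apply: D_noroot_y; rewrite in_itv andbT /= (lt_le_trans y_lt_z).
  have z_in : z \in `[z, +oo[ by rewrite in_itv /= lexx.
  have hz_gt0 := monic_pinfty_gt0 (char_poly_monic D) D_noroot_z z_in.
  rewrite /q !hornerE horner_char_poly_schur ?D_noroot_z //.
  set w := (_ *m _ *m _) 0 0.
  have w_ge0 : 0 <= w := schur_complement_ge0 D_noroot_z.
  have -> : (z - a) * (char_poly D).[z] - (char_poly D).[z] * (z - a - w) =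
            (char_poly D).[z] * w by ring.
  by rewrite mulr_ge0 // ltW.
have y_in : y \in `[mu, +oo[ by rewrite in_itv /= (le_trans mu_le_t1).
have := monic_pinfty_gt0 (char_poly_monic S) S_noroot y_in.
move: q_ge0; rewrite /q !hornerE (rootP D_y) mulr0 add0r oppr_ge0.
by move=> /le_lt_trans h /h; rewrite ltxx.
Qed.

Lemma inverse_nonneg_step mu : {in `[mu, +oo[, noroot (char_poly S)} ->
  inverse_nonneg (mu%:M - S).
Proof.
move=> S_noroot x; set y := x *m _ => y_ge0.
have D_noroot := char_poly_drsubmx_noroot S_noroot.
have mu_in : mu \in `[mu, +oo[ by rewrite in_itv /= lexx.
set M := mu%:M - D; set u := b *m invmx M.
have M_unit : M \in unitmx by rewrite unitmx_char_poly D_noroot.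
have M_inv : inverse_nonneg M := IH D_ge0 D_noroot.
have s_gt0 : 0 < mu - a - (u *m c) 0 0.
  have hD_gt0 := monic_pinfty_gt0 (char_poly_monic D) D_noroot mu_in.
  have := monic_pinfty_gt0 (char_poly_monic S) S_noroot mu_in.
  by rewrite horner_char_poly_schur ?D_noroot // pmulr_rgt0.
set x0 := lsubmx x; set x' := rsubmx x.
have y_split : y = row_mx (x0 *m (mu%:M - ulsubmx S) - x' *m c) (x' *m M - x0 *m b).
  rewrite /y -{1}(hsubmxK x) scalar_mx_sub_block mul_row_block !mulmxN.
  by rewrite [X in row_mx _ X]addrC.
have y'_ge0 : nnegmx (rsubmx y) by move=> i j; rewrite mxE.
have x'M : x' *m M = rsubmx y + x0 *m b by rewrite y_split row_mxKr subrK.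
have x0_s : (lsubmx y + rsubmx y *m invmx M *m c) 0 0 =
            x0 0 0 * (mu - a - (u *m c) 0 0).
  have -> : rsubmx y *m invmx M = x' - x0 *m u.
    by rewrite [X in rsubmx X]y_split row_mxKr mulmxBl mulmxK // /u mulmxA.
  rewrite [X in lsubmx X]y_split row_mxKl mulmxBl addrA subrK -mulmxA -mulmxBr.
  by rewrite mxE big_ord1 !mxE eqxx mulr1n.
have x0_ge0 : 0 <= x0 0 0.
  rewrite -(pmulr_lge0 _ s_gt0) -x0_s mxE addr_ge0 //; first by rewrite mxE.
  exact: nnegmx_mul (inverse_nonneg_mulV M_inv M_unit y'_ge0) c_ge0 0 0.
have x'_ge0 : nnegmx x'.
  apply: M_inv => i j; rewrite x'M mxE addr_ge0 // mxE big_ord1.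
  by rewrite mulr_ge0 // ord1.
move=> i j; rewrite -(hsubmxK x) mxE; case: (split j) => k.
  by rewrite !ord1.
exact: x'_ge0.
Qed.

End InductionStep.

Theorem Mmatrix_inverse_nonneg n (S : 'M[R]_n) mu : nnegmx S ->
  {in `[mu, +oo[, noroot (char_poly S)} -> inverse_nonneg (mu%:M - S).
Proof.
elim: n S mu => [|n IH] S mu; first by move=> _ _ x _ i [].
by move=> S_ge0; apply: (@inverse_nonneg_step n IH S S_ge0).
Qed.

Lemma subinvariant_char_poly_root n (S : 'M[R]_n) (z : 'rV_n) mu :
  nnegmx S -> nnegmx z -> z != 0 -> nnegmx (z *m S - mu *: z) ->
  ~ {in `[mu, +oo[, noroot (char_poly S)}.
Proof.
move=> S_ge0 z_ge0 /eqP z_neq0 zS_ge0 S_noroot; apply: z_neq0.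
have Nz_ge0 : nnegmx (- z).
  apply: (Mmatrix_inverse_nonneg S_ge0 S_noroot).
  by rewrite mulNmx mulmxBr mul_mx_scalar opprB.
apply/rowP => j; rewrite mxE; apply/le_anti; rewrite z_ge0 andbT.
by have := Nz_ge0 0 j; rewrite mxE oppr_ge0.
Qed.

End MMatrix.

Section SpectralRadius.
Variable R : rcfType.
Local Open Scope complex_scope.

Lemma normr_normc (z : R[i]) : `|z| = (normc z)%:C.
Proof. by case: z. Qed.

Lemma normc_ge0 (z : R[i]) : 0 <= normc z.
Proof. by rewrite -lecR -normr_normc normr_ge0. Qed.

Lemma mx_eigenvaluesP n (M : 'M[R[i]]_n) z :
  (z \in mx_eigenvalues M) = eigenvalue M z.
Proof.
rewrite eigenvalue_root_char /mx_eigenvalues.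
case: closed_field_poly_normal => zs /= ->.
by rewrite (monicP (char_poly_monic M)) scale1r root_prod_XsubC.
Qed.

Definition spectral_radiusR n (M : 'M[R]_n) : R :=
  \big[Num.max/0]_(z <- mx_eigenvalues (cmx M)) normc z.

Lemma spectral_radiusE n (M : 'M[R]_n) :
  spectral_radius M = (spectral_radiusR M)%:C.
Proof.
rewrite /spectral_radius /spectral_radiusR.
rewrite (big_morph (fun x : R => x%:C) (id1 := 0) (op1 := Num.max)) // => x y.
by rewrite !maxEle lecR; case: ifP.
Qed.

Lemma spectral_radiusR_ge0 n (M : 'M[R]_n) : 0 <= spectral_radiusR M.
Proof. exact: bigmax_ge_id. Qed.

Lemma eigenvalue_le_spectral_radiusR n (M : 'M[R]_n) z :
  eigenvalue (cmx M) z -> normc z <= spectral_radiusR M.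
Proof. by rewrite -mx_eigenvaluesP => z_eig; apply: le_bigmax_seq. Qed.

Lemma spectral_radiusR_le n (M : 'M[R]_n) c : 0 <= c ->
  (forall z, eigenvalue (cmx M) z -> normc z <= c) -> spectral_radiusR M <= c.
Proof.
move=> c_ge0 le_c; rewrite /spectral_radiusR big_seq.
by apply: bigmax_le => // z; rewrite mx_eigenvaluesP; apply: le_c.
Qed.

Lemma eigenvector_norm_subinvariant n (M : 'M[R]_n) (x : 'rV_n) lam :
  nnegmx M -> x *m cmx M = lam *: x ->
  nnegmx (map_mx normc x *m M - normc lam *: map_mx normc x).
Proof.
move=> M_ge0 xM i j; rewrite ord1 !mxE subr_ge0 -lecR rmorphM /=.
rewrite -!normr_normc -normrM.
have := congr1 (fun y : 'rV_n => y 0 j) xM; rewrite /= !mxE => <-.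
rewrite rmorph_sum; apply: le_trans (ler_norm_sum _ _ _) _; apply: ler_sum => k _.
have M_kj : 0 <= (M k j)%:C by rewrite lecR.
by rewrite !mxE rmorphM /= normrM -normr_normc (ger0_norm M_kj).
Qed.

Lemma subinvariant_le_spectral_radiusR n (S : 'M[R]_n) (z : 'rV_n) mu :
  nnegmx S -> nnegmx z -> z != 0 -> nnegmx (z *m S - mu *: z) ->
  mu <= spectral_radiusR S.
Proof.
move=> S_ge0 z_ge0 z_neq0 zS; rewrite leNgt; apply/negP => rho_lt_mu.
apply: (subinvariant_char_poly_root S_ge0 z_ge0 z_neq0 zS) => t.
rewrite in_itv andbT /= => mu_le_t; apply/negP => S_t.
have t_ge0 : 0 <= t.
  by rewrite (le_trans (spectral_radiusR_ge0 S)) // ltW ?(lt_le_trans rho_lt_mu).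
have : eigenvalue (cmx S) t%:C.
  by rewrite eigenvalue_root_char -(map_char_poly (real_complex R)) rmorph_root.
move=> /eigenvalue_le_spectral_radiusR.
rewrite -lecR -normr_normc ger0_norm ?lecR // => t_le.
by have := lt_le_trans rho_lt_mu (le_trans mu_le_t t_le); rewrite ltxx.
Qed.

End SpectralRadius.

Section BlockCirculantNonneg.
Variables (R : rcfType) (r s : nat) (A : 'I_r.+1 -> 'M[R]_s.+1).
Hypothesis A_ge0 : forall k, nnegmx (A k).

Lemma nnegmx_block_circulant : nnegmx (block_circulant A).
Proof.
move=> k k'; case: (block_indexP k) => p j; case: (block_indexP k') => q l.
by rewrite block_circulantE A_ge0.
Qed.

Lemma nnegmx_block_stack : nnegmx (block_stack R r s).
Proof. by move=> k l; rewrite mxE ler0n. Qed.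

Lemma mul_block_stack_eq0 (w : 'rV[R]_(r.+1 * s.+1)) :
  nnegmx w -> w *m block_stack R r s = 0 -> w = 0.
Proof.
move=> w_ge0 /rowP wP0; apply/rowP => k; case: (block_indexP k) => p j.
have /eqP := wP0 j; rewrite mul_block_stackE mxE psumr_eq0 => [/allP/(_ p)|q _].
  by rewrite mem_index_enum mxE => /(_ isT)/eqP.
exact: w_ge0.
Qed.

Lemma eigenvalue_block_circulant_le lam :
  eigenvalue (cmx (block_circulant A)) lam ->
  normc lam <= spectral_radiusR (\sum_k A k).
Proof.
case/eigenvalueP => x xA x_neq0; set w := map_mx normc x.
have w_ge0 : nnegmx w by move=> i j; rewrite mxE normc_ge0.
have w_neq0 : w != 0.
  apply: contra x_neq0 => /eqP/rowP w0; apply/eqP/rowP => k.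
  by have := w0 k; rewrite !mxE => /Normc.eq0_normc.
apply: (@subinvariant_le_spectral_radiusR _ _ _ (w *m block_stack R r s)).
- by move=> i j; rewrite summxE sumr_ge0 // => k _; apply: A_ge0.
- exact: nnegmx_mul w_ge0 nnegmx_block_stack.
- by apply: contra w_neq0 => /eqP/(mul_block_stack_eq0 w_ge0)/eqP.
rewrite -mulmxA -mul_block_circulant_stack mulmxA scalemxAl -mulmxBl.
apply: nnegmx_mul nnegmx_block_stack.
exact: eigenvector_norm_subinvariant nnegmx_block_circulant xA.
Qed.

End BlockCirculantNonneg.

Theorem lemma3p4 (R : realType) (r s : nat) (A : 'I_r.+1 -> 'M[R]_s.+1)
  (hA : forall (k : 'I_r.+1) (i j : 'I_s.+1), 0 <= A k i j) :
  spectral_radius (block_circulant A) = spectral_radius (\sum_(k < r.+1) A k).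
Proof.
rewrite !spectral_radiusE; congr (_%:C)%C; apply/le_anti/andP; split.
  apply: spectral_radiusR_le (spectral_radiusR_ge0 _) _ => z.
  exact: eigenvalue_block_circulant_le.
apply: spectral_radiusR_le (spectral_radiusR_ge0 _) _ => z z_eig.
apply: eigenvalue_le_spectral_radiusR; rewrite map_block_circulant.
by apply: eigenvalue_block_circulant; rewrite -raddf_sum.
Qed.
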